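(* Let $(\mathbf H\oplus\mathbf V,\bullet)$ be the Lie group with product $(h,v)\bullet(h',v')=(h+h',\ \rho(h)v'+v)$, where $\rho:\mathbf H\to GL(\mathbf V)$ is a representation of the additive group $\mathbf H$. Let $\pi$ be a multiplicative Poisson bivector field on this group (i.e. a Poisson–Lie structure), and let $\pi^{ij}(h,v)$ denote its components with respect to linear coordinates $(h^k)$ on $\mathbf H$ and $(v^l)$ on $\mathbf V$. Then for every $k$, the bivector field with components $\partial\pi^{ij}/\partial h^k$ is left-invariant, and for every $l$, the bivector field with components $\partial\pi^{ij}/\partial v^l$ is right-invariant on the group.
   Context: $\mathbf H,\mathbf V$ are finite-dimensional real vector spaces, $\mathbf H$ regarded as a commutative group under addition. In these linear coordinates, for every $h'\in\mathbf H$ the constant vector field $(h',0)$ is left-invariant, and for every $v'\in\mathbf V$ the constant vector field $(0,v')$ is right-invariant. *)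

From HB Require Import structures.
From mathcomp Require Import all_boot all_order all_algebra.
From mathcomp Require Import all_classical all_reals all_analysis.
Set Implicit Arguments. Unset Strict Implicit. Unset Printing Implicit Defensive.
Import Order.TTheory GRing.Theory Num.Theory.
Import numFieldNormedType.Exports.
Local Open Scope ring_scope.

Section Defs.
Variable R : realType.

Fixpoint iter_dir (V W : normedModType R) (f : V -> W) (s : seq V) : V -> W :=
  if s is u :: s' then (fun x => derive (iter_dir f s') x u) else f.

Definition smooth (V W : normedModType R) (f : V -> W) : Prop :=
  forall (s : seq V) (x : V), differentiable (iter_dir f s) x.

Definition ebasis (N : nat) (j : 'I_N) : 'rV[R]_N := delta_mx ord0 j.

Definition pderiv (N : nat) (f : 'rV[R]_N -> R) (j : 'I_N) (x : 'rV[R]_N) : R :=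
  derive f x (ebasis j).

Definition jac (N : nat) (f : 'rV[R]_N -> 'rV[R]_N) (x : 'rV[R]_N) : 'M[R]_N :=
  \matrix_(i, j) (derive f x (ebasis j)) ord0 i.

Definition bivector_field (N : nat) (P : 'rV[R]_N -> 'M[R]_N) : Prop :=
  smooth P /\ forall x, (P x)^T = - P x.

(* Poisson: antisymmetric, smooth and [pi,pi] = 0 written in coordinates *)
Definition poisson (N : nat) (P : 'rV[R]_N -> 'M[R]_N) : Prop :=
  bivector_field P /\
  forall (x : 'rV[R]_N) (i j k : 'I_N),
    \sum_(l < N) (P x i l * pderiv (fun y => P y j k) l x
                + P x j l * pderiv (fun y => P y k i) l x
                + P x k l * pderiv (fun y => P y i j) l x) = 0.

Definition push (N : nat) (f : 'rV[R]_N -> 'rV[R]_N) (X : 'M[R]_N) (x : 'rV[R]_N)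
  : 'M[R]_N := jac f x *m X *m (jac f x)^T.

Definition representation (n m : nat) (rho : 'rV[R]_n -> 'M[R]_m) : Prop :=
  smooth rho /\ (forall h, rho h \in unitmx) /\ rho 0 = 1%:M /\
  forall h h', rho (h + h') = rho h *m rho h'.

(* the group H (+) V = R^(n+m), first n coordinates h, last m coordinates v:
   (h,v) . (h',v') = (h + h', rho(h) v' + v)   (rho(h) v' written on rows) *)
Definition gmul (n m : nat) (rho : 'rV[R]_n -> 'M[R]_m) (x y : 'rV[R]_(n + m))
  : 'rV[R]_(n + m) :=
  row_mx (lsubmx x + lsubmx y) (rsubmx y *m (rho (lsubmx x))^T + rsubmx x).

Definition left_invariant (n m : nat) (rho : 'rV[R]_n -> 'M[R]_m)
  (X : 'rV[R]_(n + m) -> 'M[R]_(n + m)) : Prop :=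
  forall g x, X (gmul rho g x) = push (gmul rho g) (X x) x.

Definition right_invariant (n m : nat) (rho : 'rV[R]_n -> 'M[R]_m)
  (X : 'rV[R]_(n + m) -> 'M[R]_(n + m)) : Prop :=
  forall g x, X (gmul rho x g) = push (gmul rho ^~ g) (X x) x.

Definition multiplicative (n m : nat) (rho : 'rV[R]_n -> 'M[R]_m)
  (P : 'rV[R]_(n + m) -> 'M[R]_(n + m)) : Prop :=
  forall g g', P (gmul rho g g') =
    push (gmul rho g) (P g') g' + push (gmul rho ^~ g') (P g) g.

Definition dbivector (N : nat) (P : 'rV[R]_N -> 'M[R]_N) (k : 'I_N)
  : 'rV[R]_N -> 'M[R]_N :=
  fun x => \matrix_(i, j) pderiv (fun y => P y i j) k x.

End Defs.

From Pilot Require Import Defs.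
From HB Require Import structures.
From mathcomp Require Import all_boot all_order all_algebra.
From mathcomp Require Import all_classical all_reals all_analysis.
Local Open Scope ring_scope.
Import Order.TTheory GRing.Theory Num.Theory.
Import numFieldNormedType.Exports.
Import Pilot.Defs.

(* Suppose translations t e + _ along a fixed vector e commute with every left
   multiplication.  Then the Jacobian J of L_g is constant along e, and
   R_(t e + x) = T_(t e) o R_x has the Jacobian of R_x, so multiplicativity reads
   pi(g (t e + x)) = J pi(t e + x) J^T + C with J and C independent of t.
   Differentiating at t = 0 gives d_e pi (g x) = J (d_e pi x) J^T, i.e. d_e pi is
   left-invariant.  In H (+) V the translations along H commute with left
   multiplications, and those along V commute with right multiplications, which
   are the left multiplications of the opposite group law. *)

Section directional_derivative.
Context {R : realType}.

Lemma derive_eq_incr {V W : normedModType R} (f1 f2 : V -> W) (x1 x2 v : V) :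
  (forall h : R, f1 (h *: v + x1) - f1 x1 = f2 (h *: v + x2) - f2 x2) ->
  derive f1 x1 v = derive f2 x2 v.
Proof.
move=> incrE; rewrite /derive.
suff -> : (fun h : R => h^-1 *: ((f1 \o shift x1) (h *: v) - f1 x1)) =
          (fun h : R => h^-1 *: ((f2 \o shift x2) (h *: v) - f2 x2)) by [].
by apply/funext => h /=; rewrite incrE.
Qed.

Lemma derive_addl {V W : normedModType R} (F : V -> W) (u : W) (x w : V) :
  derive (fun y => u + F y) x w = derive F x w.
Proof. by apply: derive_eq_incr => h; rewrite [u + _]addrC addrKA. Qed.

Lemma derive_transl_equivariant {V : normedModType R} (F : V -> V) (u x w : V) :
  (forall y, F (u + y) = u + F y) -> derive F (u + x) w = derive F x w.
Proof.
by move=> Fu; apply: derive_eq_incr => h; rewrite addrCA !Fu [u + _]addrC addrKA.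
Qed.

Lemma derive_congr_mx {V : normedModType R} {N : nat} {P : V -> 'M[R]_N}
    (J K C : 'M[R]_N) x v i j :
  derivable P x v ->
  derive (fun y => (J *m P y *m K + C) i j) x v = (J *m derive P x v *m K) i j.
Proof.
move=> dP; have dPab a b : derivable (fun y => P y a b) x v by move/derivable_mxP: dP.
have -> : (fun y => (J *m P y *m K + C) i j) =
    \sum_(b < N) \sum_(a < N) ((J i a * K b j) \*: (fun y => P y a b)) + cst (C i j).
  apply/funext => y; rewrite !fct_sumE /= !mxE; congr (_ + _).
  apply: eq_bigr => b _; rewrite !mxE mulr_suml fct_sumE.
  by apply: eq_bigr => a _; rewrite /= mulrAC.
have dsum b : derivable (\sum_(a < N) (J i a * K b j) \*: (fun y => P y a b)) x v.
  by apply: derivable_sum => a; exact: derivableZ.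
rewrite deriveD ?derive_cst ?addr0; [|exact: derivable_sum|exact: derivable_cst].
rewrite derive_sum // (derive_mx dP) !mxE; apply: eq_bigr => b _.
rewrite derive_sum; last by move=> a; exact: derivableZ.
rewrite !mxE mulr_suml; apply: eq_bigr => a _.
by rewrite deriveZ // !mxE /= mulrAC.
Qed.

End directional_derivative.

Section translation_commuting_multiplication.
Variables (R : realType) (N : nat) (mul : 'rV[R]_N -> 'rV[R]_N -> 'rV[R]_N).
Variables (P : 'rV[R]_N -> 'M[R]_N) (e : 'rV[R]_N).
Hypothesis P_mul : forall g g',
  P (mul g g') = push (mul g) (P g') g' + push (mul ^~ g') (P g) g.
Hypothesis mul_transl : forall (t : R) a b, mul a (t *: e + b) = t *: e + mul a b.

Lemma jac_mul_transl g t x : jac (mul g) (t *: e + x) = jac (mul g) x.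
Proof.
by apply: eq_mx => i j; rewrite (derive_transl_equivariant _ _ _ _ (mul_transl t g)).
Qed.

Lemma jac_mulr_transl g t x : jac (mul ^~ (t *: e + x)) g = jac (mul ^~ x) g.
Proof.
have -> : mul ^~ (t *: e + x) = fun a => t *: e + mul a x by apply/funext.
by apply: eq_mx => i j; rewrite derive_addl.
Qed.

Lemma P_mul_transl g t x :
  P (mul g (t *: e + x)) =
  jac (mul g) x *m P (t *: e + x) *m (jac (mul g) x)^T + push (mul ^~ x) (P g) g.
Proof. by rewrite P_mul /push jac_mul_transl jac_mulr_transl. Qed.

Lemma derive_multiplicative_left_invariant g x :
  (forall y, derivable P y e) ->
  derive P (mul g x) e = push (mul g) (derive P x e) x.
Proof.
move=> dP; set J := jac (mul g) x; set C := push (mul ^~ x) (P g) g.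
apply/matrixP => i j; rewrite (derive_mx (dP _)) mxE /push -/J.
rewrite -(derive_congr_mx J J^T C _ _ _ _ (dP x)); apply: derive_eq_incr => h.
have := P_mul_transl g 0 x; rewrite scale0r add0r => ->.
by rewrite -mul_transl P_mul_transl.
Qed.

End translation_commuting_multiplication.

Lemma dbivectorE {R : realType} {N : nat} (P : 'rV[R]_N -> 'M[R]_N) k x :
  derivable P x (ebasis R k) -> dbivector P k x = derive P x (ebasis R k).
Proof. by move=> dP; rewrite (derive_mx dP); apply/matrixP => i j; rewrite !mxE. Qed.

Section semidirect_product.
Context {R : realType} {n m : nat} (rho : 'rV[R]_n -> 'M[R]_m).

Lemma gmul_translr (u a b : 'rV[R]_(n + m)) :
  rsubmx u = 0 -> gmul rho a (u + b) = u + gmul rho a b.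
Proof.
move=> u_H; rewrite /gmul !linearD /= u_H add0r -[in RHS](hsubmxK u) u_H.
by rewrite add_row_mx add0r addrCA.
Qed.

Lemma gmul_transll (u a b : 'rV[R]_(n + m)) :
  lsubmx u = 0 -> gmul rho (u + a) b = u + gmul rho a b.
Proof.
move=> u_V; rewrite /gmul !linearD /= u_V add0r -[in RHS](hsubmxK u) u_V.
by rewrite add_row_mx add0r addrCA.
Qed.

Lemma rsubmx_ebasis_lshift (k : 'I_n) : rsubmx (ebasis R (lshift m k)) = 0.
Proof. by apply/matrixP => i j; rewrite !mxE eq_rlshift andbF. Qed.

Lemma lsubmx_ebasis_rshift (l : 'I_m) : lsubmx (ebasis R (rshift n l)) = 0.
Proof. by apply/matrixP => i j; rewrite !mxE eq_lrshift andbF. Qed.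

End semidirect_product.

Theorem lemma3 (R : realType) (n m : nat) (rho : 'rV[R]_n -> 'M[R]_m)
  (P : 'rV[R]_(n + m) -> 'M[R]_(n + m)) :
  representation rho -> poisson P -> multiplicative rho P ->
  (forall k : 'I_n, left_invariant rho (dbivector P (lshift m k))) /\
  (forall l : 'I_m, right_invariant rho (dbivector P (rshift n l))).
Proof.
move=> _ [[P_smooth _] _] P_mul.
have dP y v : derivable P y v by apply: diff_derivable; exact: (P_smooth [::] y).
split=> [k | l] g x; rewrite !dbivectorE //.
- apply: derive_multiplicative_left_invariant => // t a b.
  by rewrite gmul_translr // linearZ /= rsubmx_ebasis_lshift scaler0.
- apply: (@derive_multiplicative_left_invariant _ _ (fun a b => gmul rho b a)).
  + by move=> a b; rewrite P_mul addrC.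
  + by move=> t a b; rewrite gmul_transll // linearZ /= lsubmx_ebasis_rshift scaler0.
  + by [].
Qed.
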